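(* Let $m>0$, $\gamma\in\mathbb{R}$, $f$ a real function, and consider the system $$i\partial_t\psi_1=\partial_x\psi_2-f(|\psi_1|^2-|\psi_2|^2)\psi_1+m\psi_1+i\gamma\psi_2,\qquad i\partial_t\psi_2=-\partial_x\psi_1+f(|\psi_1|^2-|\psi_2|^2)\psi_2-m\psi_2+i\gamma\psi_1.$$ Suppose $(\tilde v(x),\tilde u(x))$ (complex-valued) is such that $(\tilde v,\tilde u)^Te^{-i\tilde\omega t}$ is a solution. Then for all $\alpha_\pm\in\mathbb{C}$ with $|\alpha_-|^2-|\alpha_+|^2=1$, $$\psi_1(t,x)=\alpha_-\tilde v(x)e^{-i\tilde\omega t}-i\alpha_+\overline{\tilde u(x)}e^{i\tilde\omega t},\qquad \psi_2(t,x)=\alpha_-\tilde u(x)e^{-i\tilde\omega t}-i\alpha_+\overline{\tilde v(x)}e^{i\tilde\omega t}$$ is also a solution, and $|\psi_1|^2-|\psi_2|^2=|\tilde v|^2-|\tilde u|^2$ for all $t$.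
   Context: This is the one-dimensional Soler model with a $\mathcal{P}\mathcal{T}$-symmetric gain–loss term $i\gamma\sigma_1\psi$ (the case $\gamma=0$ is the ordinary 1D Soler model). Overline denotes complex conjugation. *)

From Stdlib Require Import Reals Lra.
Open Scope R_scope.

Definition Cplx : Type := (R * R)%type.
Definition Cre (z : Cplx) : R := fst z.
Definition Cim (z : Cplx) : R := snd z.
Definition Cof (r : R) : Cplx := (r, 0).
Definition Ci : Cplx := (0, 1).
Definition Cadd (z w : Cplx) : Cplx := (fst z + fst w, snd z + snd w).
Definition Copp (z : Cplx) : Cplx := (- fst z, - snd z).
Definition Csub (z w : Cplx) : Cplx := Cadd z (Copp w).
Definition Cmul (z w : Cplx) : Cplx :=
  (fst z * fst w - snd z * snd w, fst z * snd w + snd z * fst w).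
Definition Cconj (z : Cplx) : Cplx := (fst z, - snd z).
Definition Cnorm2 (z : Cplx) : R := fst z * fst z + snd z * snd z.
Definition Cexpi (theta : R) : Cplx := (cos theta, sin theta).

Definition Cderiv (g : R -> Cplx) (s : R) (d : Cplx) : Prop :=
  derivable_pt_lim (fun r => fst (g r)) s (fst d) /\
  derivable_pt_lim (fun r => snd (g r)) s (snd d).

Definition is_solution (m gamma : R) (f : R -> R) (psi1 psi2 : R -> R -> Cplx) : Prop :=
  forall t x : R,
    exists d1t d1x d2t d2x : Cplx,
      Cderiv (fun s => psi1 s x) t d1t /\
      Cderiv (fun y => psi1 t y) x d1x /\
      Cderiv (fun s => psi2 s x) t d2t /\
      Cderiv (fun y => psi2 t y) x d2x /\
      let F := f (Cnorm2 (psi1 t x) - Cnorm2 (psi2 t x)) in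
      Cmul Ci d1t =
        Cadd (Cadd (Csub d2x (Cmul (Cof F) (psi1 t x))) (Cmul (Cof m) (psi1 t x)))
             (Cmul (Cmul Ci (Cof gamma)) (psi2 t x)) /\
      Cmul Ci d2t =
        Cadd (Csub (Cadd (Copp d1x) (Cmul (Cof F) (psi2 t x))) (Cmul (Cof m) (psi2 t x)))
             (Cmul (Cmul Ci (Cof gamma)) (psi1 t x)).

(** The hyperbolic rotation (v, u) ↦ α₋ (v, u) e^{-iωt} − i α₊ (ū, v̄) e^{iωt} preserves the
    Lorentzian density |ψ₁|² − |ψ₂|², because the cross terms of the two squared moduli coincide
    and |α₋|² − |α₊|² = 1. Hence the nonlinear coefficient f(|ψ₁|² − |ψ₂|²) is the same
    time-independent potential F(x) = f(|v|² − |u|²) as for the standing wave, and the system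
    becomes linear in ψ. The profile (v, u) solves the stationary equations with frequency ω, and
    its conjugate (−iū, −iv̄) e^{iωt} solves the same linear system, hence so does the superposition. *)
From Stdlib Require Import Reals Lra FunctionalExtensionality.
Open Scope R_scope.

Lemma Cderiv_const (c : Cplx) (s : R) : Cderiv (fun _ => c) s (0, 0).
Proof. split; apply derivable_pt_lim_const. Qed.

Lemma Cderiv_mul (g h : R -> Cplx) (s : R) (dg dh : Cplx) :
  Cderiv g s dg -> Cderiv h s dh ->
  Cderiv (fun r => Cmul (g r) (h r)) s (Cadd (Cmul dg (h s)) (Cmul (g s) dh)).
Proof.
  intros [g1 g2] [h1 h2]; split; simpl.
  - replace (fst dg * fst (h s) - snd dg * snd (h s) +
               (fst (g s) * fst dh - snd (g s) * snd dh))
      with ((fst dg * fst (h s) + fst (g s) * fst dh) -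
            (snd dg * snd (h s) + snd (g s) * snd dh)) by ring.
    apply (derivable_pt_lim_minus (fun r => fst (g r) * fst (h r))
                                  (fun r => snd (g r) * snd (h r)));
      apply derivable_pt_lim_mult; assumption.
  - replace (fst dg * snd (h s) + snd dg * fst (h s) +
               (fst (g s) * snd dh + snd (g s) * fst dh))
      with ((fst dg * snd (h s) + fst (g s) * snd dh) +
            (snd dg * fst (h s) + snd (g s) * fst dh)) by ring.
    apply (derivable_pt_lim_plus (fun r => fst (g r) * snd (h r))
                                 (fun r => snd (g r) * fst (h r)));
      apply derivable_pt_lim_mult; assumption.
Qed.

Lemma Cderiv_sub (g h : R -> Cplx) (s : R) (dg dh : Cplx) :
  Cderiv g s dg -> Cderiv h s dh ->
  Cderiv (fun r => Csub (g r) (h r)) s (Csub dg dh).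
Proof.
  intros [g1 g2] [h1 h2]; split.
  - exact (derivable_pt_lim_minus (fun r => fst (g r)) (fun r => fst (h r)) _ _ _ g1 h1).
  - exact (derivable_pt_lim_minus (fun r => snd (g r)) (fun r => snd (h r)) _ _ _ g2 h2).
Qed.

Lemma Cderiv_conj (g : R -> Cplx) (s : R) (dg : Cplx) :
  Cderiv g s dg -> Cderiv (fun r => Cconj (g r)) s (Cconj dg).
Proof.
  intros [g1 g2]; split; [exact g1|].
  exact (derivable_pt_lim_opp (fun r => snd (g r)) _ _ g2).
Qed.

Lemma Cderiv_expi (k s : R) :
  Cderiv (fun r => Cexpi (k * r)) s (Cmul (0, k) (Cexpi (k * s))).
Proof.
  assert (Dlin : derivable_pt_lim (fun r => k * r) s k).
  { pose proof (derivable_pt_lim_scal id k s 1 (derivable_pt_lim_id s)) as D.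
    rewrite Rmult_1_r in D; exact D. }
  split; simpl.
  - replace (0 * cos (k * s) - k * sin (k * s)) with (- sin (k * s) * k) by ring.
    exact (derivable_pt_lim_comp (fun r => k * r) cos s k _ Dlin (derivable_pt_lim_cos _)).
  - replace (0 * sin (k * s) + k * cos (k * s)) with (cos (k * s) * k) by ring.
    exact (derivable_pt_lim_comp (fun r => k * r) sin s k _ Dlin (derivable_pt_lim_sin _)).
Qed.

Lemma Cderiv_unique (g : R -> Cplx) (s : R) (d1 d2 : Cplx) :
  Cderiv g s d1 -> Cderiv g s d2 -> d1 = d2.
Proof.
  intros [a1 b1] [a2 b2]; destruct d1, d2.
  f_equal; eapply uniqueness_limite; eassumption.
Qed.

Ltac Cderiv_solve :=
  repeat first [ apply Cderiv_const | apply Cderiv_sub | apply Cderiv_mul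
               | apply Cderiv_conj | apply Cderiv_expi | eassumption ].

Lemma Cmul_expi_0 (z : Cplx) (k : R) : Cmul z (Cexpi (k * 0)) = z.
Proof.
  destruct z; unfold Cexpi, Cmul; simpl.
  rewrite Rmult_0_r, cos_0, sin_0; f_equal; ring.
Qed.

Lemma Cnorm2_sub_boost (am ap v u : Cplx) (k t : R) :
  Cnorm2 (Csub (Cmul am (Cmul v (Cexpi (- k * t))))
               (Cmul Ci (Cmul ap (Cmul (Cconj u) (Cexpi (k * t)))))) -
  Cnorm2 (Csub (Cmul am (Cmul u (Cexpi (- k * t))))
               (Cmul Ci (Cmul ap (Cmul (Cconj v) (Cexpi (k * t)))))) =
  (Cnorm2 am - Cnorm2 ap) * (Cnorm2 v - Cnorm2 u).
Proof.
  replace (- k * t) with (- (k * t)) by ring.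
  unfold Cexpi; rewrite cos_neg, sin_neg.
  pose proof (sin2_cos2 (k * t)) as Hsc; unfold Rsqr in Hsc.
  set (c := cos (k * t)) in *; set (s := sin (k * t)) in *.
  destruct am as [a1 a2], ap as [b1 b2], v as [v1 v2], u as [u1 u2].
  unfold Cnorm2, Csub, Cadd, Copp, Cmul, Cconj, Ci; simpl.
  transitivity ((a1 * a1 + a2 * a2 - (b1 * b1 + b2 * b2)) * (s * s + c * c) *
                (v1 * v1 + v2 * v2 - (u1 * u1 + u2 * u2))); [ring|].
  rewrite Hsc; ring.
Qed.

(* At t = 0 the time derivative of the standing wave is -iω (v, u), which turns the
   system into stationary equations; we solve them for the spatial derivatives. *)
Lemma standing_wave_profile {m gamma omega : R} {f : R -> R} {v u : R -> Cplx} :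
  is_solution m gamma f (fun t x => Cmul (v x) (Cexpi (- omega * t)))
                        (fun t x => Cmul (u x) (Cexpi (- omega * t))) ->
  forall x : R,
  let F := f (Cnorm2 (v x) - Cnorm2 (u x)) in
  exists dv du : Cplx,
    Cderiv v x dv /\ Cderiv u x du /\
    dv = Cadd (Cmul (Cof (F - m - omega)) (u x)) (Cmul (Cmul Ci (Cof gamma)) (v x)) /\
    du = Csub (Cmul (Cof (F - m + omega)) (v x)) (Cmul (Cmul Ci (Cof gamma)) (u x)).
Proof.
  intros standing_wave x F.
  destruct (standing_wave 0 x) as (d1t & dv & d2t & du & D1t & Dv & D2t & Du & E1 & E2).
  cbv beta zeta in *; rewrite !Cmul_expi_0 in E1, E2.
  assert (Drop : forall w : R -> Cplx, (fun y => Cmul (w y) (Cexpi (- omega * 0))) = w)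
    by (intro w; apply functional_extensionality; intro; apply Cmul_expi_0).
  rewrite Drop in Dv, Du.
  rewrite (Cderiv_unique _ _ _ _ D1t
             (Cderiv_mul _ _ 0 _ _ (Cderiv_const (v x) 0) (Cderiv_expi (- omega) 0))) in E1.
  rewrite (Cderiv_unique _ _ _ _ D2t
             (Cderiv_mul _ _ 0 _ _ (Cderiv_const (u x) 0) (Cderiv_expi (- omega) 0))) in E2.
  exists dv, du; do 2 (split; [assumption|]).
  fold F in E1, E2; unfold Cexpi in E1, E2; rewrite Rmult_0_r, cos_0, sin_0 in E1, E2.
  destruct (v x) as [v1 v2], (u x) as [u1 u2], dv as [p1 p2], du as [q1 q2].
  cbv [Csub Cmul Cadd Copp Ci Cof fst snd] in E1, E2 |- *.
  injection E1 as E11 E12; injection E2 as E21 E22.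
  split; f_equal; lra.
Qed.

Theorem mainTheorem6 (m gamma : R) (f : R -> R) (v u : R -> Cplx) (omega : R)
  (Hm : 0 < m)
  (Hsol : is_solution m gamma f
            (fun t x => Cmul (v x) (Cexpi (- omega * t)))
            (fun t x => Cmul (u x) (Cexpi (- omega * t))))
  (am ap : Cplx) (Ha : Cnorm2 am - Cnorm2 ap = 1) :
  let psi1 := fun t x =>
    Csub (Cmul am (Cmul (v x) (Cexpi (- omega * t))))
         (Cmul Ci (Cmul ap (Cmul (Cconj (u x)) (Cexpi (omega * t))))) in
  let psi2 := fun t x =>
    Csub (Cmul am (Cmul (u x) (Cexpi (- omega * t))))
         (Cmul Ci (Cmul ap (Cmul (Cconj (v x)) (Cexpi (omega * t))))) in
  is_solution m gamma f psi1 psi2 /\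
  (forall t x : R,
     Cnorm2 (psi1 t x) - Cnorm2 (psi2 t x) = Cnorm2 (v x) - Cnorm2 (u x)).
Proof.
  cbv zeta.
  split; [| intros t x; rewrite Cnorm2_sub_boost, Ha; ring].
  intros t x.
  destruct (standing_wave_profile Hsol x) as (dv & du & Dv & Du & Edv & Edu).
  do 4 eexists; do 4 (split; [Cderiv_solve|]).
  cbv zeta; rewrite Cnorm2_sub_boost, Ha, Rmult_1_l.
  set (F := f _) in *; set (E := Cexpi (- omega * t)); set (E' := Cexpi (omega * t)).
  destruct (v x) as [v1 v2], (u x) as [u1 u2], am as [a1 a2], ap as [b1 b2],
    dv as [p1 p2], du as [q1 q2], E as [c s], E' as [c' s'].
  cbv [Csub Cmul Cadd Copp Cconj Ci Cof fst snd] in Edv, Edu |- *.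
  injection Edv as -> ->; injection Edu as -> ->.
  split; f_equal; ring.
Qed.
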